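(* Suppose that $SI$, $UI$, $CI$ define a nonnegative bivariate information decomposition, and suppose that $SI$ and $UI$ are left monotonic. Then for any finite-valued random variables $X_1,X_2$ and any function $f$ on the alphabet of the pair $(X_1,X_2)$, $$SI(f(X_1,X_2);X_1,X_2)\le I(X_1;X_2).$$
   Context: All random variables have finite alphabets. A nonnegative bivariate information decomposition consists of nonnegative functions $SI(S;X_1,X_2)$, $UI(S;X_1\setminus X_2)$, $UI(S;X_2\setminus X_1)$, $CI(S;X_1,X_2)$, defined for every joint distribution of $(S,X_1,X_2)$ with arbitrary finite alphabets and depending continuously on it, such that $I(S;X_1X_2)=SI(S;X_1,X_2)+CI(S;X_1,X_2)+UI(S;X_1\setminus X_2)+UI(S;X_2\setminus X_1)$, $I(S;X_1)=SI(S;X_1,X_2)+UI(S;X_1\setminus X_2)$ and $I(S;X_2)=SI(S;X_1,X_2)+UI(S;X_2\setminus X_1)$, where $I$ denotes mutual information. Left monotonicity of $SI$: $SI(S;X_1,X_2)\ge SI(g(S);X_1,X_2)$ for all $(S,X_1,X_2)$ and every function $g$ on the alphabet of $S$. Left monotonicity of $UI$: $UI(S;X_1\setminus X_2)\ge UI(g(S);X_1\setminus X_2)$ and $UI(S;X_2\setminus X_1)\ge UI(g(S);X_2\setminus X_1)$ for all $(S,X_1,X_2)$ and every function $g$ on the alphabet of $S$. *)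

From mathcomp Require Import all_boot all_order all_algebra.
From mathcomp Require Import all_classical all_reals all_analysis.
Set Implicit Arguments. Unset Strict Implicit. Unset Printing Implicit Defensive.
Import Order.TTheory GRing.Theory Num.Theory.
Local Open Scope ring_scope.

Section InfoDecomp.
Variable R : realType.

Definition is_dist (T : finType) (p : {ffun T -> R}) : Prop :=
  (forall t, 0 <= p t) /\ \sum_t p t = 1.

Definition push (T U : finType) (f : T -> U) (p : {ffun T -> R}) : {ffun U -> R} :=
  [ffun u => \sum_(t | f t == u) p t].

(* Mutual information I(A;B) of a joint pmf on A * B (natural log,
   convention 0 log 0 = 0). *)
Definition MI (A B : finType) (p : {ffun A * B -> R}) : R :=
  \sum_(ab : A * B | p ab != 0)
     p ab * ln (p ab / (push fst p ab.1 * push snd p ab.2)).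

(* Joint distributions of (S, X1, X2) are pmfs on S * X1 * X2 = (S*X1)*X2. *)
Definition infofun := forall S X1 X2 : finType, {ffun S * X1 * X2 -> R} -> R.

Definition MI_S_X12 (S X1 X2 : finType) (p : {ffun S * X1 * X2 -> R}) : R :=
  MI (push (fun t : S * X1 * X2 => (t.1.1, (t.1.2, t.2))) p).
Definition MI_S_X1 (S X1 X2 : finType) (p : {ffun S * X1 * X2 -> R}) : R :=
  MI (push (fun t : S * X1 * X2 => t.1) p).
Definition MI_S_X2 (S X1 X2 : finType) (p : {ffun S * X1 * X2 -> R}) : R :=
  MI (push (fun t : S * X1 * X2 => (t.1.1, t.2)) p).

Definition swap12 (S X1 X2 : finType) (p : {ffun S * X1 * X2 -> R})
  : {ffun S * X2 * X1 -> R} :=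
  push (fun t : S * X1 * X2 => (t.1.1, t.2, t.1.2)) p.

Definition lmap (S S' X1 X2 : finType) (g : S -> S') (p : {ffun S * X1 * X2 -> R})
  : {ffun S' * X1 * X2 -> R} :=
  push (fun t : S * X1 * X2 => (g t.1.1, t.1.2, t.2)) p.

(* SI F  = SI(S;X1,X2);  UI S X1 X2 p = UI(S;X1\X2);
   UI(S;X2\X1) = UI S X2 X1 (swap12 p);  CI = CI(S;X1,X2). *)
Definition UI12 (UI : infofun) (S X1 X2 : finType) (p : {ffun S * X1 * X2 -> R}) : R :=
  UI S X1 X2 p.
Definition UI21 (UI : infofun) (S X1 X2 : finType) (p : {ffun S * X1 * X2 -> R}) : R :=
  UI S X2 X1 (swap12 p).

Definition continuous_on_dists (F : infofun) : Prop :=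
  forall (S X1 X2 : finType) (p : {ffun S * X1 * X2 -> R}), is_dist p ->
  forall e : R, 0 < e -> exists2 d : R, 0 < d &
    forall q : {ffun S * X1 * X2 -> R}, is_dist q ->
      (forall t, `|q t - p t| < d) -> `|F S X1 X2 q - F S X1 X2 p| < e.

Definition nonneg_on_dists (F : infofun) : Prop :=
  forall (S X1 X2 : finType) (p : {ffun S * X1 * X2 -> R}), is_dist p ->
    0 <= F S X1 X2 p.

Record nonneg_info_decomp (SI UI CI : infofun) : Prop := {
  nid_SI_ge0 : nonneg_on_dists SI;
  nid_UI_ge0 : nonneg_on_dists UI;
  nid_CI_ge0 : nonneg_on_dists CI;
  nid_SI_cont : continuous_on_dists SI;
  nid_UI_cont : continuous_on_dists UI;
  nid_CI_cont : continuous_on_dists CI;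
  nid_total : forall (S X1 X2 : finType) (p : {ffun S * X1 * X2 -> R}), is_dist p ->
    MI_S_X12 p = SI S X1 X2 p + CI S X1 X2 p + UI12 UI p + UI21 UI p;
  nid_X1 : forall (S X1 X2 : finType) (p : {ffun S * X1 * X2 -> R}), is_dist p ->
    MI_S_X1 p = SI S X1 X2 p + UI12 UI p;
  nid_X2 : forall (S X1 X2 : finType) (p : {ffun S * X1 * X2 -> R}), is_dist p ->
    MI_S_X2 p = SI S X1 X2 p + UI21 UI p
}.

Definition SI_left_monotonic (SI : infofun) : Prop :=
  forall (S S' X1 X2 : finType) (g : S -> S') (p : {ffun S * X1 * X2 -> R}),
    is_dist p -> SI S' X1 X2 (lmap g p) <= SI S X1 X2 p.

Definition UI_left_monotonic (UI : infofun) : Prop :=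
  forall (S S' X1 X2 : finType) (g : S -> S') (p : {ffun S * X1 * X2 -> R}),
    is_dist p ->
    UI12 UI (lmap g p) <= UI12 UI p /\ UI21 UI (lmap g p) <= UI21 UI p.

End InfoDecomp.

(* Let X = (X1, X2).  Left monotonicity of SI gives
   SI(f(X); X1, X2) <= SI(X; X1, X2).  Coarsening X to X1 does not change
   I(X; X1) = H(X1) but, by left monotonicity of UI, can only decrease
   UI(X; X1 \ X2); hence SI(X; X1, X2) <= SI(X1; X1, X2).  Finally
   SI(X1; X1, X2) = I(X1; X2) - UI(X1; X2 \ X1) <= I(X1; X2). *)
From mathcomp Require Import all_boot all_order all_algebra.
From mathcomp Require Import all_classical all_reals all_analysis.
Import Order.TTheory GRing.Theory Num.Theory.
Local Open Scope ring_scope.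

Section Pushforward.
Context {R : realType}.

Lemma push_comp {T U V : finType} (h : T -> U) (g : U -> V) (k : T -> V)
    {q : {ffun T -> R}} :
  g \o h =1 k -> push g (push h q) = push k q.
Proof.
move=> ghk; apply/ffunP => v; rewrite !ffunE.
under eq_bigr do rewrite ffunE.
rewrite [RHS](partition_big h (fun u => g u == v)); last by move=> t; rewrite -ghk.
apply: eq_bigr => u /eqP guv; apply: eq_bigl => t.
apply/idP/idP; last by case/andP.
by move=> /eqP htu; rewrite -ghk /= htu guv !eqxx.
Qed.

Lemma push_id {T : finType} (h : T -> T) {q : {ffun T -> R}} :
  h =1 id -> push h q = q.
Proof.
by move=> hid; apply/ffunP => t; rewrite ffunE (big_pred1 t) // => t' /=; rewrite hid.
Qed.

Lemma sum_push {T U : finType} (h : T -> U) (q : {ffun T -> R}) :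
  \sum_u push h q u = \sum_t q t.
Proof. by rewrite (partition_big h predT) //=; apply: eq_bigr => u _; rewrite ffunE. Qed.

Lemma is_dist_push {T U : finType} (h : T -> U) {q : {ffun T -> R}} :
  is_dist q -> is_dist (push h q).
Proof.
case=> q_ge0 q_sum1; split; last by rewrite sum_push.
by move=> u; rewrite ffunE; apply: sumr_ge0.
Qed.

Lemma is_dist_lmap {S S' X1 X2 : finType} (g : S -> S')
    {p : {ffun S * X1 * X2 -> R}} :
  is_dist p -> is_dist (lmap g p).
Proof. exact: is_dist_push. Qed.

Lemma sum_push_inj {T U : finType} {h : T -> U} {q : {ffun T -> R}}
    (F : U -> R -> R) :
  injective h -> (forall u, F u 0 = 0) ->
  \sum_u F u (push h q u) = \sum_t F (h t) (q t).
Proof.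
move=> h_inj F0; rewrite (partition_big h predT) //=.
apply: eq_bigr => u _; rewrite ffunE.
case: (pickP (fun t => h t == u)) => [t /eqP <-|no_preim]; last first.
  by rewrite !big_pred0 // F0.
by rewrite !(big_pred1 t) // => t'; rewrite /= (inj_eq h_inj).
Qed.

End Pushforward.

Section Entropy.
Context {R : realType}.

(* Shannon entropy; the summand vanishes at [m t = 0] whatever [ln 0^-1] is. *)
Definition entropy {T : finType} (m : {ffun T -> R}) : R :=
  \sum_t m t * ln (m t)^-1.

Lemma MI_graph {A B : finType} (g : A -> B) {m : {ffun A -> R}} :
  MI (push (fun a => (a, g a)) m) = entropy (push g m).
Proof.
rewrite /MI (push_comp _ fst (fun a => a)) // push_id //.
rewrite (push_comp _ snd g) // big_mkcond /=.
rewrite (sum_push_inj (fun ab r => if r != 0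
    then r * ln (r / (m ab.1 * push g m ab.2)) else 0)); first last.
- by move=> u; rewrite eqxx.
- by move=> a a' [].
have log_ratio (x y : R) :
    (if x != 0 then x * ln (x / (x * y)) else 0) = x * ln y^-1.
  have [->|x_neq0] := eqVneq x 0; first by rewrite /= mul0r.
  by rewrite invfM mulrA mulfV // mul1r.
under eq_bigr do rewrite log_ratio.
rewrite /entropy (partition_big g predT) //=.
apply: eq_bigr => b _; rewrite ffunE big_distrl /=.
by apply: eq_bigr => a /eqP <-; rewrite ffunE.
Qed.

Lemma MI_diag {A : finType} (m : {ffun A -> R}) :
  MI (push (fun a => (a, a)) m) = entropy m.
Proof. by rewrite (MI_graph id) push_id. Qed.

End Entropy.

Section CopyDistribution.
Context {R : realType} {X1 X2 : finType}.
Variable q : {ffun X1 * X2 -> R}.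

Definition copy_dist : {ffun (X1 * X2) * X1 * X2 -> R} :=
  push (fun x => (x, x.1, x.2)) q.

Lemma lmap_copy_dist (Y : finType) (f : X1 * X2 -> Y) :
  lmap f copy_dist = push (fun x => (f x, x.1, x.2)) q.
Proof. exact: push_comp. Qed.

Lemma MI_S_X1_copy_dist : MI_S_X1 copy_dist = entropy (push fst q).
Proof. by rewrite /MI_S_X1 (push_comp _ _ (fun x => (x, x.1))) // MI_graph. Qed.

Lemma MI_S_X1_lmap_fst_copy_dist :
  MI_S_X1 (lmap fst copy_dist) = entropy (push fst q).
Proof.
rewrite /MI_S_X1 lmap_copy_dist (push_comp _ _ (fun x => (x.1, x.1))) //.
by rewrite -(push_comp fst (fun a => (a, a))) // MI_diag.
Qed.

Lemma MI_S_X2_lmap_fst_copy_dist : MI_S_X2 (lmap fst copy_dist) = MI q.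
Proof.
rewrite /MI_S_X2 lmap_copy_dist (push_comp _ _ (fun x => (x.1, x.2))) //.
by rewrite push_id // => -[].
Qed.

End CopyDistribution.

Section Decomposition.
Context {R : realType} {SI UI CI : infofun R}.
Hypothesis decomp : nonneg_info_decomp SI UI CI.

Lemma SI_le_MI_S_X2 {S X1 X2 : finType} {p : {ffun S * X1 * X2 -> R}} :
  is_dist p -> SI S X1 X2 p <= MI_S_X2 p.
Proof.
move=> p_dist; rewrite (nid_X2 decomp p_dist) lerDl.
by apply: (nid_UI_ge0 decomp); apply: is_dist_push.
Qed.

Lemma SI_le_lmap_of_MI_S_X1_eq {S S' X1 X2 : finType} (g : S -> S')
    {p : {ffun S * X1 * X2 -> R}} :
  UI_left_monotonic UI -> is_dist p -> MI_S_X1 (lmap g p) = MI_S_X1 p ->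
  SI S X1 X2 p <= SI S' X1 X2 (lmap g p).
Proof.
move=> UI_mono p_dist MI_eq.
have [UI_le _] := UI_mono _ _ _ _ g p p_dist.
rewrite -(lerD2r (UI12 UI p)) -(nid_X1 decomp p_dist) -MI_eq.
by rewrite (nid_X1 decomp (is_dist_lmap g p_dist)) lerD2l.
Qed.

End Decomposition.

Theorem proposition1 (R : realType) (SI UI CI : infofun R) :
  nonneg_info_decomp SI UI CI ->
  SI_left_monotonic SI -> UI_left_monotonic UI ->
  forall (X1 X2 Y : finType) (q : {ffun X1 * X2 -> R}) (f : X1 * X2 -> Y),
    is_dist q ->
    SI Y X1 X2 (push (fun x : X1 * X2 => (f x, x.1, x.2)) q) <= MI q.
Proof.
move=> decomp SI_mono UI_mono X1 X2 Y q f q_dist.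
have p_dist : is_dist (copy_dist q) by apply: is_dist_push.
rewrite -lmap_copy_dist.
apply: le_trans (SI_mono _ _ _ _ f _ p_dist) _.
apply: le_trans (SI_le_lmap_of_MI_S_X1_eq decomp fst UI_mono p_dist _) _.
  by rewrite MI_S_X1_lmap_fst_copy_dist MI_S_X1_copy_dist.
rewrite -(MI_S_X2_lmap_fst_copy_dist q).
exact/(SI_le_MI_S_X2 decomp)/is_dist_lmap.
Qed.
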